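(* Let $(L,\preceq)$ be a lattice and let $\mathrm{LCon}\,L$ be the set of all local congruences on $L$, ordered by inclusion $\sqsubseteq$. Then $(\mathrm{LCon}\,L,\sqsubseteq)$ is a complete lattice, whose least element is $\delta_\bot=\{(a,a)\mid a\in L\}$ and whose greatest element is $\delta_\top=\{(a,b)\mid a,b\in L\}$.
   Context: A local congruence on a lattice $(L,\preceq)$ is an equivalence relation on $L$ each of whose equivalence classes is a sublattice of $L$ and is convex (if $u,v$ are in the class and $u\preceq w\preceq v$, then $w$ is in the class). For equivalence relations $\rho_1,\rho_2$ on $L$, $\rho_1\sqsubseteq\rho_2$ means that every equivalence class of $\rho_1$ is contained in some equivalence class of $\rho_2$ (equivalently $\rho_1\subseteq\rho_2$ as sets of pairs). *)

From HB Require Import structures.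
From mathcomp Require Import all_boot all_order.
Set Implicit Arguments. Unset Strict Implicit. Unset Printing Implicit Defensive.
Import Order.Theory.
Local Open Scope order_scope.

Definition relation (T : Type) := T -> T -> Prop.

Definition equivalence_rel (T : Type) (rho : relation T) : Prop :=
  (forall x, rho x x) /\
  (forall x y, rho x y -> rho y x) /\
  (forall x y z, rho x y -> rho y z -> rho x z).

Definition eq_class (T : Type) (rho : relation T) (a : T) : T -> Prop :=
  fun x => rho a x.

Definition is_sublattice d (L : latticeType d) (A : L -> Prop) : Prop :=
  forall x y, A x -> A y -> A (x `&` y) /\ A (x `|` y).

Definition is_convex d (L : latticeType d) (A : L -> Prop) : Prop :=
  forall u v w, A u -> A v -> u <= w -> w <= v -> A w.

Definition local_congruence d (L : latticeType d) (rho : relation L) : Prop :=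
  equivalence_rel rho /\
  (forall a, is_sublattice (eq_class rho a) /\ is_convex (eq_class rho a)).

Definition rel_le (T : Type) (r1 r2 : relation T) : Prop :=
  forall x y, r1 x y -> r2 x y.

Definition delta_bot (T : Type) : relation T := fun a b => a = b.
Definition delta_top (T : Type) : relation T := fun _ _ => True.

Definition is_lcon_sup d (L : latticeType d) (S : relation L -> Prop)
  (s : relation L) : Prop :=
  local_congruence s /\ (forall r, S r -> rel_le r s) /\
  (forall t, local_congruence t -> (forall r, S r -> rel_le r t) -> rel_le s t).

Definition is_lcon_inf d (L : latticeType d) (S : relation L -> Prop)
  (s : relation L) : Prop :=
  local_congruence s /\ (forall r, S r -> rel_le s r) /\
  (forall t, local_congruence t -> (forall r, S r -> rel_le t r) -> rel_le t s).

(* Local congruences are closed under arbitrary intersections: the class of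
   a in the intersection is the intersection of the classes of a, and
   intersections of convex sublattices are convex sublattices.  Hence LCon L
   is a closure system on L x L, so infima are intersections and the supremum
   of a family is the intersection of all its upper bounds in LCon L (for the
   empty family the intersection is delta_top). *)

From HB Require Import structures.
From mathcomp Require Import all_boot all_order.
(* Imported after mathcomp so that [equivalence_rel] is the one of Defs, not ssrbool's. *)
From Pilot Require Import Defs.
Set Implicit Arguments. Unset Strict Implicit. Unset Printing Implicit Defensive.
Import Order.Theory.
Local Open Scope order_scope.

Definition rel_bigcap (T : Type) (F : relation T -> Prop) : relation T :=
  fun x y => forall r, F r -> r x y.

Lemma rel_bigcap_lb (T : Type) (F : relation T -> Prop) (r : relation T) :
  F r -> rel_le (rel_bigcap F) r.
Proof. by move=> Fr x y; apply. Qed.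

Lemma rel_bigcap_glb (T : Type) (F : relation T -> Prop) (t : relation T) :
  (forall r, F r -> rel_le t r) -> rel_le t (rel_bigcap F).
Proof. by move=> tF x y txy r Fr; exact: tF. Qed.

Lemma equivalence_rel_bigcap (T : Type) (F : relation T -> Prop) :
  (forall r, F r -> equivalence_rel r) -> equivalence_rel (rel_bigcap F).
Proof.
move=> eqF; split; [|split].
- by move=> x r /eqF [refl _].
- by move=> x y xy r Fr; have [_ [sym _]] := eqF r Fr; exact: sym _ _ (xy r Fr).
- move=> x y z xy yz r Fr; have [_ [_ trans]] := eqF r Fr.
  exact: trans _ _ _ (xy r Fr) (yz r Fr).
Qed.

Section LocalCongruenceBigcap.
Variables (d : Order.disp_t) (L : latticeType d) (F : relation L -> Prop).
Hypothesis lcF : forall r, F r -> local_congruence r.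

Lemma sublattice_class_bigcap a : is_sublattice (eq_class (rel_bigcap F) a).
Proof.
move=> x y ax ay; split=> r Fr; have [_ /(_ a) [subl _]] := lcF Fr;
  by have [] := subl x y (ax r Fr) (ay r Fr).
Qed.

Lemma convex_class_bigcap a : is_convex (eq_class (rel_bigcap F) a).
Proof.
move=> u v w au av uw wv r Fr; have [_ /(_ a) [_ conv]] := lcF Fr.
exact: conv (au r Fr) (av r Fr) uw wv.
Qed.

Lemma local_congruence_bigcap : local_congruence (rel_bigcap F).
Proof.
split; first by apply: equivalence_rel_bigcap => r /lcF [].
by move=> a; split; [exact: sublattice_class_bigcap | exact: convex_class_bigcap].
Qed.

Lemma lcon_inf_bigcap : is_lcon_inf F (rel_bigcap F).
Proof.
split; first exact: local_congruence_bigcap.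
by split=> [r|t _]; [exact: rel_bigcap_lb | exact: rel_bigcap_glb].
Qed.

End LocalCongruenceBigcap.

Definition lcon_upper_bounds d (L : latticeType d) (S : relation L -> Prop) :
    relation L -> Prop :=
  fun t => local_congruence t /\ forall r, S r -> rel_le r t.

Lemma lcon_sup_bigcap_upper_bounds d (L : latticeType d)
    (S : relation L -> Prop) :
  is_lcon_sup S (rel_bigcap (lcon_upper_bounds S)).
Proof.
split; first by apply: local_congruence_bigcap => t [].
split=> [r Sr | t lct ubt].
- by apply: rel_bigcap_glb => t [_]; apply.
- exact: rel_bigcap_lb.
Qed.

Lemma local_congruence_delta_bot d (L : latticeType d) :
  local_congruence (@delta_bot L).
Proof.
split; first by split=> [//|]; split=> [x y ->|x y z -> ->].
move=> a; split=> [x y <- <-|u v w <- <- aw wa].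
- by rewrite /eq_class meetxx joinxx.
- by apply/le_anti; rewrite aw wa.
Qed.

Lemma delta_bot_le d (L : latticeType d) (rho : relation L) :
  local_congruence rho -> rel_le (@delta_bot L) rho.
Proof. by move=> [[refl _] _] x y ->. Qed.

Lemma local_congruence_delta_top d (L : latticeType d) :
  local_congruence (@delta_top L).
Proof. by split; [split; [|split]|] => //; split. Qed.

Theorem theorem5p2 (d : Order.disp_t) (L : latticeType d) :
  (* (LCon L, ⊑) is a complete lattice: every family of local congruences
     has a supremum and an infimum in LCon L *)
  (forall S : relation L -> Prop, (forall r, S r -> local_congruence r) ->
     (exists s, is_lcon_sup S s) /\ (exists i, is_lcon_inf S i)) /\
  (* δ_⊥ is the least element *)
  local_congruence (@delta_bot L) /\
  (forall rho, local_congruence rho -> rel_le (@delta_bot L) rho) /\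
  (* δ_⊤ is the greatest element *)
  local_congruence (@delta_top L) /\
  (forall rho, local_congruence rho -> rel_le rho (@delta_top L)).
Proof.
split=> [S lcS|]; first split.
- by eexists; exact: lcon_sup_bigcap_upper_bounds.
- by eexists; exact: lcon_inf_bigcap.
split; first exact: local_congruence_delta_bot.
split; first exact: delta_bot_le.
by split; [exact: local_congruence_delta_top | by []].
Qed.
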